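(* Let $m,n\ge 1$ and let $\lambda\subseteq\nu$ be partitions contained in the rectangle $(n-1)^{m-1}$. Then $\mathrm{PASM}(\nu/\lambda,m,n)$ is exactly the set of real $m\times n$ matrices $X=(X_{ij})$ satisfying all of the following: (1) $0\le \sum_{i'=1}^{i} X_{i'j}\le 1$ for all $1\le i\le m$, $1\le j\le n$; (2) $0\le \sum_{j'=1}^{j} X_{ij'}\le 1$ for all $1\le i\le m$, $1\le j\le n$; (3) $\sum_{i=1}^{m} X_{i1}=1$ and $\sum_{j=1}^{n} X_{1j}=1$; (4) $\sum_{j=1}^{n} X_{ij}=0$ for $2\le i\le m$, and $\sum_{i=1}^{m} X_{ij}=0$ for $2\le j\le n$; (5) $X_{ij}=0$ whenever $j\le\lambda_i$; (6) $X_{ij}=0$ whenever $i>1$ and $\nu_{i-1}+1<j\le n$, and $X_{1j}=0$ whenever $\nu_1+1<j\le n$.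
   Context: A partition $\mu=(\mu_1\ge\mu_2\ge\cdots)$ is a weakly decreasing sequence of nonnegative integers with finitely many nonzero terms; $\ell(\mu)$ denotes its number of positive parts. We identify $\mu$ with the set of matrix positions $\{(i,j): i\ge1,\ 1\le j\le\mu_i\}$. We write $\mu\subseteq\nu$ if $\mu_i\le\nu_i$ for all $i$, and $\mu\subseteq a^b$ (the $b\times a$ rectangle) if $\ell(\mu)\le b$ and $\mu_1\le a$. For a partition $\mu\subseteq(n-1)^{m-1}$, the $m\times n$ matrix $M^\mu=M^\mu(m,n)$ has entries: $M^\mu_{1,\mu_1+1}=1$; for each $1\le k\le m-1$ with $\mu_k>\mu_{k+1}$, $M^\mu_{k+1,\mu_{k+1}+1}=1$ and $M^\mu_{k+1,\mu_k+1}=-1$; all other entries are $0$. For partitions $\lambda\subseteq\nu\subseteq(n-1)^{m-1}$, $\mathrm{PASM}(\nu/\lambda,m,n)$ is the convex hull in $\mathbb{R}^{mn}$ of the matrices $M^\mu(m,n)$ over all partitions $\mu$ with $\lambda\subseteq\mu\subseteq\nu$. *)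

From HB Require Import structures.
From mathcomp Require Import all_boot all_order all_algebra.
From mathcomp Require Import reals.
Set Implicit Arguments. Unset Strict Implicit. Unset Printing Implicit Defensive.
Import Order.TTheory GRing.Theory Num.Theory.
Local Open Scope ring_scope.

(* Partitions are represented 0-indexed: mu : nat -> nat with  mu i = mu_{i+1}. *)
Definition is_partition (mu : nat -> nat) : Prop :=
  (forall i, (mu i.+1 <= mu i)%N) /\ exists N, forall i, (N <= i)%N -> mu i = 0%N.

Definition part_sub (mu nu : nat -> nat) : Prop := forall i, (mu i <= nu i)%N.

(* mu \subseteq a^b  (b x a rectangle): l(mu) <= b and mu_1 <= a *)
Definition in_rect (a b : nat) (mu : nat -> nat) : Prop :=
  (forall i, (b <= i)%N -> mu i = 0%N) /\ (mu 0 <= a)%N.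

(* The matrix M^mu(m,n), 0-indexed: row 0 has a 1 in column mu_1 (0-indexed);
   for k >= 1 (0-indexed row k = paper's row k+1), if mu_k > mu_{k+1}
   (i.e. mu (k-1) > mu k) then entry (k, mu k) is 1 and entry (k, mu (k-1)) is -1. *)
Definition Mmu (R : pzRingType) (m n : nat) (mu : nat -> nat) : 'M[R]_(m, n) :=
  \matrix_(i < m, j < n)
    if (i : nat) == 0%N then ((j : nat) == mu 0%N)%:R
    else if (mu i.-1 > mu i)%N
         then ((j : nat) == mu i)%:R - ((j : nat) == mu i.-1)%:R
         else 0.

Definition conv_hull (R : realType) (V : lmodType R) (S : V -> Prop) (x : V) : Prop :=
  exists (k : nat) (w : 'I_k -> R) (p : 'I_k -> V),
    [/\ forall t, 0 <= w t, \sum_t w t = 1, forall t, S (p t)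
      & x = \sum_t w t *: p t].

Definition PASM (R : realType) (lam nu : nat -> nat) (m n : nat) : 'M[R]_(m, n) -> Prop :=
  conv_hull (fun X : 'M[R]_(m, n) =>
    exists mu, [/\ is_partition mu, part_sub lam mu, part_sub mu nu & X = Mmu R m n mu]).

Definition PASM_ineq (R : realType) (lam nu : nat -> nat) (m n : nat)
    (X : 'M[R]_(m, n)) : Prop :=
      (forall (i : 'I_m) (j : 'I_n),
        0 <= \sum_(i' < m | (i' <= i)%N) X i' j <= 1) /\
      (forall (i : 'I_m) (j : 'I_n),
        0 <= \sum_(j' < n | (j' <= j)%N) X i j' <= 1) /\
      ((forall j : 'I_n, (j : nat) = 0%N -> \sum_(i < m) X i j = 1) /\
      (forall i : 'I_m, (i : nat) = 0%N -> \sum_(j < n) X i j = 1)) /\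
      ((forall i : 'I_m, (0 < i)%N -> \sum_(j < n) X i j = 0) /\
      (forall j : 'I_n, (0 < j)%N -> \sum_(i < m) X i j = 0)) /\
      (* (5) X_{ij} = 0 when j <= lambda_i (1-indexed) *)
      (forall (i : 'I_m) (j : 'I_n), (j < lam i)%N -> X i j = 0) /\
      (* (6) X_{ij} = 0 when i > 1 and nu_{i-1}+1 < j; X_{1j} = 0 when nu_1+1 < j *)
      ((forall (i : 'I_m) (j : 'I_n), (0 < i)%N -> (nu i.-1 < j)%N -> X i j = 0) /\
      (forall (i : 'I_m) (j : 'I_n), (i : nat) = 0%N -> (nu 0%N < j)%N -> X i j = 0)).

(* Let C be the matrix of column partial sums of X. Conditions (3) and (4) say
   that every row of C sums to 1, (1) that its entries lie in [0, 1], and (2)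
   that the cumulative row sums of C increase weakly from one row to the next;
   for X = M^mu, row i of C is the indicator of column mu_i. So the vertices
   satisfy (1)-(6), and these conditions are preserved by convex combinations.
   Conversely, given X satisfying (1)-(6), let mu_i be the first column in
   which row i of C is positive: (2) makes mu a partition and (5), (6) put it
   between lambda and nu. If t is the least of the entries C_(i, mu_i), then
   either t = 1 and X = M^mu, or (X - t M^mu) / (1 - t) again satisfies
   (1)-(6) and has fewer nonzero entries in its C; induction on that number
   writes X as a convex combination of the M^mu. *)

From HB Require Import structures.
From mathcomp Require Import all_boot all_order all_algebra.
From mathcomp Require Import reals.
From mathcomp Require Import zify lra.
Set Implicit Arguments. Unset Strict Implicit. Unset Printing Implicit Defensive.
Import Order.TTheory GRing.Theory Num.Theory.
Local Open Scope ring_scope.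

Section NumSums.
Variable R : numDomainType.
Implicit Types f : nat -> R.

Lemma sum_nat_indicator N a : \sum_(0 <= k < N) ((k == a)%:R : R) = (a < N)%:R.
Proof.
elim: N => [|N IH]; first by rewrite big_geq.
rewrite big_nat_recr //= IH ltnS.
by case: (ltngtP a N) => _; rewrite /= ?addr0 ?add0r.
Qed.

Lemma ler_sum_nat_prefix f j N : (forall k, (k < N)%N -> 0 <= f k) -> (j <= N)%N ->
  \sum_(0 <= k < j) f k <= \sum_(0 <= k < N) f k.
Proof.
move=> f0 jN; rewrite [leRHS](big_cat_nat _ (n := j)) //= lerDl big_seq sumr_ge0 // => k.
by rewrite mem_index_iota => /andP[_ /f0].
Qed.

Lemma ler_sum_nat_term f N a : (forall k, (k < N)%N -> 0 <= f k) -> (a < N)%N ->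
  f a <= \sum_(0 <= k < N) f k.
Proof.
move=> f0 aN; rewrite (bigD1_seq a) ?mem_index_iota ?iota_uniq //= lerDl.
by rewrite big_seq_cond sumr_ge0 // => k /andP[]; rewrite mem_index_iota => /andP[_ /f0].
Qed.

Lemma ler_sum_nat_pair f N a b : (forall k, (k < N)%N -> 0 <= f k) ->
  (a < N)%N -> (b < N)%N -> a != b -> f a + f b <= \sum_(0 <= k < N) f k.
Proof.
move=> f0 aN bN ab; rewrite big_mkord (bigD1 (Ordinal aN)) //= (bigD1 (Ordinal bN)) /=.
  by rewrite addrA lerDl sumr_ge0 // => k _; apply: f0.
by rewrite -val_eqE /= eq_sym.
Qed.

Lemma sum_ord_prefix k (F : nat -> R) i : (i < k)%N ->
  \sum_(l < k | (l <= i)%N) F l = \sum_(0 <= l < i.+1) F l.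
Proof. by move=> ik; rewrite (big_nat_widen 0 i.+1 k) // -(big_mkord (fun l => (l <= i)%N)). Qed.

Lemma sum_affine (s t : R) (f g : nat -> R) a b :
  \sum_(a <= k < b) s * (f k - t * g k) =
  s * (\sum_(a <= k < b) f k - t * \sum_(a <= k < b) g k).
Proof. by rewrite -mulr_sumr sumrB -mulr_sumr. Qed.

Lemma exchange_weighted_sum k (w : 'I_k -> R) (F : 'I_k -> nat -> R) a b :
  \sum_(a <= q < b) \sum_t w t * F t q = \sum_t w t * \sum_(a <= q < b) F t q.
Proof. by rewrite exchange_big; apply: eq_bigr => t _; rewrite mulr_sumr. Qed.

Lemma convex_comb_in01 k (w v : 'I_k -> R) :
  (forall t, 0 <= w t) -> \sum_t w t = 1 -> (forall t, 0 <= v t <= 1) ->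
  0 <= \sum_t w t * v t <= 1.
Proof.
move=> w0 w1 v01; apply/andP; split.
  by rewrite sumr_ge0 // => t _; case/andP: (v01 t) => v0 _; rewrite mulr_ge0.
rewrite -w1 ler_sum // => t _; case/andP: (v01 t) => _ v1.
by rewrite -[leRHS]mulr1 ler_wpM2l.
Qed.

Lemma affine_comb_const k (w v : 'I_k -> R) c :
  \sum_t w t = 1 -> (forall t, v t = c) -> \sum_t w t * v t = c.
Proof. by move=> w1 vc; under eq_bigr do rewrite vc; rewrite -mulr_suml w1 mul1r. Qed.

End NumSums.

Section ConvexHull.
Variables (R : realType) (V : lmodType R) (S : V -> Prop).

Lemma conv_hull_mem x : S x -> conv_hull S x.
Proof.
move=> Sx; exists 1%N, (fun _ => 1), (fun _ => x).
by split=> //; rewrite ?big_ord1 ?scale1r.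
Qed.

Lemma conv_hull_mix x y t : S x -> conv_hull S y -> 0 <= t <= 1 ->
  conv_hull S (t *: x + (1 - t) *: y).
Proof.
move=> Sx [k [w [p [w0 w1 Sp ->]]]] /andP[t0 t1].
exists k.+1, (fun q => if unlift ord0 q is Some q' then (1 - t) * w q' else t),
  (fun q => if unlift ord0 q is Some q' then p q' else x).
split.
- by move=> q; case: (unlift ord0 q) => [q'|] //; rewrite mulr_ge0 ?subr_ge0.
- rewrite big_ord_recl unlift_none; under eq_bigr do rewrite liftK.
  by rewrite -mulr_sumr w1 mulr1 addrC subrK.
- by move=> q; case: (unlift ord0 q).
- rewrite big_ord_recl unlift_none; under [in RHS]eq_bigr do rewrite liftK.
  by rewrite scaler_sumr; congr (_ + _); apply: eq_bigr => q _; rewrite scalerA.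
Qed.

End ConvexHull.

Lemma partition_nonincr mu i k : is_partition mu -> (i <= k)%N -> (mu k <= mu i)%N.
Proof.
move=> [mu_dec _] /subnK <-; elim: (k - i)%N => // d IH.
by rewrite addSn; exact: leq_trans (mu_dec _) IH.
Qed.

Section PASMDescription.
Variables (R : realType) (m n : nat) (lam nu : nat -> nat).
Hypotheses (m_gt0 : (0 < m)%N) (n_gt0 : (0 < n)%N).
Hypotheses (lam_part : is_partition lam) (nu_part : is_partition nu).
Hypotheses (lam_rect : in_rect n.-1 m.-1 lam) (nu_rect : in_rect n.-1 m.-1 nu).
Implicit Types (x y : nat -> nat -> R) (mu : nat -> nat).

Definition csum x i j := \sum_(0 <= k < i.+1) x k j.
Definition rsum x i j := \sum_(0 <= k < j.+1) x i k.
Definition crsum x i j := rsum (csum x) i j.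

Record pasm_eqs x : Prop := PasmEqs {
  col0_sum1 : \sum_(0 <= i < m) x i 0%N = 1;
  row0_sum1 : \sum_(0 <= j < n) x 0%N j = 1;
  row_sum0 : forall i, (0 < i)%N -> (i < m)%N -> \sum_(0 <= j < n) x i j = 0;
  col_sum0 : forall j, (0 < j)%N -> (j < n)%N -> \sum_(0 <= i < m) x i j = 0;
  below_lam0 : forall i j, (i < m)%N -> (j < n)%N -> (j < lam i)%N -> x i j = 0;
  beyond_nu0 : forall i j, (0 < i)%N -> (i < m)%N -> (j < n)%N ->
    (nu i.-1 < j)%N -> x i j = 0;
  row0_beyond_nu0 : forall j, (j < n)%N -> (nu 0 < j)%N -> x 0%N j = 0 }.

(* Conditions (1)-(6) for arrays indexed by [nat], so that neighbouring rows are
   easy to compare; entries outside the [m] by [n] box are unconstrained. *)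
Record pasm_cond x : Prop := PasmCond {
  csum_in01 : forall i j, (i < m)%N -> (j < n)%N -> 0 <= csum x i j <= 1;
  rsum_in01 : forall i j, (i < m)%N -> (j < n)%N -> 0 <= rsum x i j <= 1;
  pasm_eqsP : pasm_eqs x }.

Lemma csum0 x j : csum x 0 j = x 0%N j.
Proof. exact: big_nat1. Qed.

Lemma csumS x i j : csum x i.+1 j = csum x i j + x i.+1 j.
Proof. exact: big_nat_recr. Qed.

Lemma sum_col_csum x j : \sum_(0 <= i < m) x i j = csum x m.-1 j.
Proof. by rewrite /csum prednK. Qed.

Lemma sum_row_rsum x i : \sum_(0 <= j < n) x i j = rsum x i n.-1.
Proof. by rewrite /rsum prednK. Qed.

Lemma rsum_crsum0 x j : rsum x 0 j = crsum x 0 j.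
Proof. by apply: eq_bigr => k _; rewrite csum0. Qed.

Lemma rsum_crsumS x i j : rsum x i.+1 j = crsum x i.+1 j - crsum x i j.
Proof. by rewrite -sumrB; apply: eq_bigr => k _; rewrite csumS addrAC subrr add0r. Qed.

(* Row partial sums are differences of consecutive rows of [crsum]: condition (2)
   holds as soon as [crsum] lies in [0, 1] and increases weakly down each column. *)
Lemma rsum_in01_of_crsum x :
  (forall i j, (i < m)%N -> (j < n)%N -> 0 <= crsum x i j <= 1) ->
  (forall i j, (i.+1 < m)%N -> (j < n)%N -> crsum x i j <= crsum x i.+1 j) ->
  forall i j, (i < m)%N -> (j < n)%N -> 0 <= rsum x i j <= 1.
Proof.
move=> D01 Dmono [|i] j im jn; first by rewrite rsum_crsum0 D01.
have /andP[Di0 _] := D01 i j (ltnW im) jn; have /andP[_ DS1] := D01 _ _ im jn.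
by rewrite rsum_crsumS subr_ge0 Dmono //=; lra.
Qed.

Definition box_eq x y := forall i j, (i < m)%N -> (j < n)%N -> x i j = y i j.

Lemma csum_box_eq x y : box_eq x y -> box_eq (csum x) (csum y).
Proof. by move=> e i j im jn; apply: eq_big_nat => k /andP[_ ki]; apply: e => //; lia. Qed.

Lemma rsum_box_eq x y : box_eq x y -> box_eq (rsum x) (rsum y).
Proof. by move=> e i j im jn; apply: eq_big_nat => k /andP[_ kj]; apply: e => //; lia. Qed.

Lemma box_eq_of_csum x y : box_eq (csum x) (csum y) -> box_eq x y.
Proof.
move=> e [|i] j im jn; first by rewrite -csum0 e // csum0.
by apply: (@addrI _ (csum x i j)); rewrite -csumS e // (e i) ?csumS //; lia.
Qed.

Lemma pasm_eqs_box_eq x y : box_eq x y -> pasm_eqs x -> pasm_eqs y.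
Proof.
move=> e [c0 r0 rs cs bl bn bn0].
have col j : (j < n)%N -> \sum_(0 <= i < m) x i j = \sum_(0 <= i < m) y i j.
  by move=> jn; apply: eq_big_nat => i /andP[_ im]; apply: e.
have row i : (i < m)%N -> \sum_(0 <= j < n) x i j = \sum_(0 <= j < n) y i j.
  by move=> im; apply: eq_big_nat => j /andP[_ jn]; apply: e.
split.
- by rewrite -col.
- by rewrite -row.
- by move=> i i0 im; rewrite -row // rs.
- by move=> j j0 jn; rewrite -col // cs.
- by move=> i j im jn jl; rewrite -e // bl.
- by move=> i j i0 im jn jl; rewrite -e // bn.
- by move=> j jn jl; rewrite -e // bn0.
Qed.

Lemma pasm_cond_box_eq x y : box_eq x y -> pasm_cond x -> pasm_cond y.
Proof.
move=> e [c r q]; split; last exact: pasm_eqs_box_eq q.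
- by move=> i j im jn; rewrite -(csum_box_eq e) // c.
- by move=> i j im jn; rewrite -(rsum_box_eq e) // r.
Qed.

Definition admissible mu := [/\ is_partition mu, part_sub lam mu & part_sub mu nu].

Definition mmu mu i j : R :=
  if i == 0%N then (j == mu 0%N)%:R
  else if (mu i < mu i.-1)%N then (j == mu i)%:R - (j == mu i.-1)%:R else 0.

Lemma csum_mmu mu i j : is_partition mu -> csum (mmu mu) i j = (j == mu i)%:R.
Proof.
move=> mu_part; elim: i => [|i IH]; first by rewrite csum0 /mmu eqxx.
rewrite csumS IH /mmu /=; case: ltnP => [_|mu_le]; first by rewrite addrC subrK.
have -> : mu i.+1 = mu i by apply/eqP; rewrite eqn_leq mu_le mu_part.1.
by rewrite addr0.
Qed.

Lemma crsum_mmu mu i j : is_partition mu -> crsum (mmu mu) i j = (mu i <= j)%N%:R.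
Proof.
by move=> mu_part; rewrite /crsum /rsum; under eq_bigr do rewrite csum_mmu //;
  rewrite sum_nat_indicator ltnS.
Qed.

Lemma mmu_eq0 mu i j : j != mu i -> j != mu i.-1 -> mmu mu i j = 0.
Proof.
rewrite /mmu => /negbTE ji /negbTE ji'; case: i ji ji' => [|i] /= -> // ->.
by case: ifP; rewrite ?subrr.
Qed.

Lemma pasm_cond_mmu mu : admissible mu -> pasm_cond (mmu mu).
Proof.
case=> mu_part lam_mu mu_nu.
have mu_last : mu m.-1 = 0%N by apply/eqP; rewrite -leqn0 -(nu_rect.1 m.-1) ?mu_nu.
have mu_le i : (mu i <= n.-1)%N.
  by rewrite (leq_trans (partition_nonincr mu_part (leq0n i))) ?(leq_trans (mu_nu 0%N)) ?nu_rect.2.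
have ind01 (b : bool) : 0 <= (b%:R : R) <= 1 by case: b; rewrite ?lexx ?ler01.
split.
- by move=> i j _ _; rewrite csum_mmu.
- apply: rsum_in01_of_crsum => i j *; rewrite !crsum_mmu // ler_nat.
  by case: (leqP (mu i) j) => // h; rewrite (leq_trans (mu_part.1 i) h).
split.
- by rewrite sum_col_csum csum_mmu // mu_last.
- by rewrite sum_row_rsum rsum_crsum0 crsum_mmu // mu_le.
- by move=> [|i] // _ _; rewrite sum_row_rsum rsum_crsumS !crsum_mmu // !mu_le subrr.
- by move=> j j0 _; rewrite sum_col_csum csum_mmu // mu_last; case: j j0.
- move=> i j _ _ jl; have h1 := lam_mu i; have h2 := lam_mu i.-1.
  have h3 := partition_nonincr lam_part (leq_pred i).
  by apply: mmu_eq0; lia.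
- move=> i j _ _ _ jl; have h1 := mu_nu i.-1.
  have h2 := partition_nonincr mu_part (leq_pred i).
  by apply: mmu_eq0; lia.
- by move=> j _ jl; have h := mu_nu 0%N; apply: mmu_eq0 => /=; lia.
Qed.

Lemma pasm_eqs_lincomb k (w : 'I_k -> R) (y : 'I_k -> nat -> nat -> R) :
  \sum_t w t = 1 -> (forall t, pasm_eqs (y t)) ->
  pasm_eqs (fun i j => \sum_t w t * y t i j).
Proof.
move=> w1 yE; split.
- rewrite (exchange_weighted_sum w (fun t i => y t i 0%N)).
  by apply: affine_comb_const => // t; apply: col0_sum1.
- rewrite (exchange_weighted_sum w (fun t j => y t 0%N j)).
  by apply: affine_comb_const => // t; apply: row0_sum1.
- move=> i i0 im; rewrite (exchange_weighted_sum w (fun t j => y t i j)).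
  by apply: affine_comb_const => // t; apply: row_sum0.
- move=> j j0 jn; rewrite (exchange_weighted_sum w (fun t i => y t i j)).
  by apply: affine_comb_const => // t; apply: col_sum0.
- by move=> i j im jn jl; rewrite big1 // => t _; rewrite below_lam0 ?mulr0.
- by move=> i j i0 im jn jl; rewrite big1 // => t _; rewrite beyond_nu0 ?mulr0.
- by move=> j jn jl; rewrite big1 // => t _; rewrite row0_beyond_nu0 ?mulr0.
Qed.

Lemma pasm_cond_convex k (w : 'I_k -> R) (y : 'I_k -> nat -> nat -> R) :
  (forall t, 0 <= w t) -> \sum_t w t = 1 -> (forall t, pasm_cond (y t)) ->
  pasm_cond (fun i j => \sum_t w t * y t i j).
Proof.
move=> w0 w1 yP; split.
- move=> i j im jn; rewrite /csum (exchange_weighted_sum w (fun t k => y t k j)).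
  by apply: convex_comb_in01 => // t; apply: csum_in01.
- move=> i j im jn; rewrite /rsum (exchange_weighted_sum w (fun t k => y t i k)).
  by apply: convex_comb_in01 => // t; apply: rsum_in01.
- by apply: pasm_eqs_lincomb => // t; case: (yP t).
Qed.

Lemma csum_affine s t x y i j :
  csum (fun i j => s * (x i j - t * y i j)) i j = s * (csum x i j - t * csum y i j).
Proof. exact: sum_affine. Qed.

Lemma crsum_affine s t x y i j :
  crsum (fun i j => s * (x i j - t * y i j)) i j = s * (crsum x i j - t * crsum y i j).
Proof. by rewrite /crsum /rsum; under eq_bigr do rewrite csum_affine; rewrite sum_affine. Qed.

Lemma pasm_eqs_affine s t x y : s * (1 - t) = 1 -> pasm_eqs x -> pasm_eqs y ->
  pasm_eqs (fun i j => s * (x i j - t * y i j)).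
Proof.
move=> st1 [xc0 xr0 xrs xcs xbl xbn xbn0] [yc0 yr0 yrs ycs ybl ybn ybn0]; split.
- by rewrite sum_affine xc0 yc0 mulr1.
- by rewrite sum_affine xr0 yr0 mulr1.
- by move=> i i0 im; rewrite sum_affine xrs ?yrs // mulr0 subrr mulr0.
- by move=> j j0 jn; rewrite sum_affine xcs ?ycs // mulr0 subrr mulr0.
- by move=> i j im jn jl; rewrite xbl ?ybl // mulr0 subrr mulr0.
- by move=> i j i0 im jn jl; rewrite xbn ?ybn // mulr0 subrr mulr0.
- by move=> j jn jl; rewrite xbn0 ?ybn0 // mulr0 subrr mulr0.
Qed.

Definition csupport x := [set p : 'I_m * 'I_n | csum x p.1 p.2 != 0].

Lemma csupport_box_eq x y : box_eq x y -> csupport x = csupport y.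
Proof. by move=> e; apply/setP => -[i j]; rewrite !inE /= (csum_box_eq e). Qed.

(* Outside the box this returns an arbitrary entry of [X]; it is never inspected. *)
Definition mxentry (X : 'M[R]_(m, n)) i j :=
  X (insubd (Ordinal m_gt0) i) (insubd (Ordinal n_gt0) j).

Lemma mxentryE X (i : 'I_m) (j : 'I_n) : mxentry X i j = X i j.
Proof. by rewrite /mxentry !valKd. Qed.

Lemma mxentry_lincomb k (w : 'I_k -> R) (p : 'I_k -> 'M[R]_(m, n)) i j :
  mxentry (\sum_t w t *: p t) i j = \sum_t w t * mxentry (p t) i j.
Proof. by rewrite /mxentry summxE; apply: eq_bigr => t _; rewrite mxE. Qed.

Lemma mxentry_affine s t X Y i j :
  mxentry (s *: (X - t *: Y)) i j = s * (mxentry X i j - t * mxentry Y i j).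
Proof. by rewrite /mxentry !mxE. Qed.

Lemma mxentry_Mmu mu i j : (i < m)%N -> (j < n)%N -> mxentry (Mmu R m n mu) i j = mmu mu i j.
Proof. by move=> im jn; rewrite /mxentry mxE !insubdK. Qed.

Lemma PASM_ineqE X : PASM_ineq lam nu X <-> pasm_cond (mxentry X).
Proof.
have eC (i : 'I_m) (j : 'I_n) :
    \sum_(i' < m | (i' <= i)%N) X i' j = csum (mxentry X) i j.
  by rewrite /csum -(sum_ord_prefix _ (ltn_ord i)); apply: eq_bigr => k _; rewrite mxentryE.
have eR (i : 'I_m) (j : 'I_n) :
    \sum_(j' < n | (j' <= j)%N) X i j' = rsum (mxentry X) i j.
  by rewrite /rsum -(sum_ord_prefix _ (ltn_ord j)); apply: eq_bigr => k _; rewrite mxentryE.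
have eCol (j : 'I_n) : \sum_(i < m) X i j = \sum_(0 <= i < m) mxentry X i j.
  by rewrite big_mkord; apply: eq_bigr => k _; rewrite mxentryE.
have eRow (i : 'I_m) : \sum_(j < n) X i j = \sum_(0 <= j < n) mxentry X i j.
  by rewrite big_mkord; apply: eq_bigr => k _; rewrite mxentryE.
split.
- move=> [h1 [h2 [[h3a h3b] [[h4a h4b] [h5 [h6a h6b]]]]]]; split; [| |split].
  + by move=> i j im jn; have := h1 (Ordinal im) (Ordinal jn); rewrite eC.
  + by move=> i j im jn; have := h2 (Ordinal im) (Ordinal jn); rewrite eR.
  + by have := h3a (Ordinal n_gt0) erefl; rewrite eCol.
  + by have := h3b (Ordinal m_gt0) erefl; rewrite eRow.
  + by move=> i i0 im; have := h4a (Ordinal im) i0; rewrite eRow.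
  + by move=> j j0 jn; have := h4b (Ordinal jn) j0; rewrite eCol.
  + move=> i j im jn jl; have := h5 (Ordinal im) (Ordinal jn) jl.
    by rewrite -(mxentryE X (Ordinal im) (Ordinal jn)).
  + move=> i j i0 im jn jl; have := h6a (Ordinal im) (Ordinal jn) i0 jl.
    by rewrite -(mxentryE X (Ordinal im) (Ordinal jn)).
  + move=> j jn jl; have := h6b (Ordinal m_gt0) (Ordinal jn) erefl jl.
    by rewrite -(mxentryE X (Ordinal m_gt0) (Ordinal jn)).
- move=> [h1 h2 [h3a h3b h4a h4b h5 h6a h6b]].
  split; first by move=> i j; rewrite eC; apply: h1.
  split; first by move=> i j; rewrite eR; apply: h2.
  split; first by split=> [j j0|i i0]; rewrite ?eCol ?eRow ?j0 ?i0.
  split; first by split=> [i i0|j j0]; rewrite ?eCol ?eRow; [apply: h4a | apply: h4b].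
  split; first by move=> i j jl; rewrite -mxentryE; apply: h5.
  split; first by move=> i j i0 jl; rewrite -mxentryE; apply: h6a.
  by move=> i j i0 jl; rewrite -mxentryE i0; apply: h6b.
Qed.

Lemma pasm_cond_of_PASM X : PASM lam nu X -> pasm_cond (mxentry X).
Proof.
move=> [k [w [p [w0 w1 pV ->]]]].
apply: (@pasm_cond_box_eq (fun i j => \sum_t w t * mxentry (p t) i j)).
  by move=> i j _ _; rewrite mxentry_lincomb.
apply: pasm_cond_convex => // t; have [mu [mu_part lam_mu mu_nu ->]] := pV t.
apply: (@pasm_cond_box_eq (mmu mu)); first by move=> i j im jn; rewrite mxentry_Mmu.
exact: pasm_cond_mmu.
Qed.

Section Greedy.
Variable x : nat -> nat -> R.
Hypothesis xP : pasm_cond x.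
Let xE := pasm_eqsP xP.

Lemma csum_ge0 i j : (i < m)%N -> (j < n)%N -> 0 <= csum x i j.
Proof. by move=> im jn; case/andP: (csum_in01 xP im jn). Qed.

Lemma csum_le1 i j : (i < m)%N -> (j < n)%N -> csum x i j <= 1.
Proof. by move=> im jn; case/andP: (csum_in01 xP im jn). Qed.

Lemma sum_csum_row i : (i < m)%N -> \sum_(0 <= j < n) csum x i j = 1.
Proof.
move=> im; rewrite exchange_big /=.
rewrite (eq_big_nat _ _ (F2 := fun k => ((k == 0%N)%:R : R))) ?sum_nat_indicator //.
move=> [|k] /andP[_ ki]; first exact: row0_sum1 xE.
by rewrite (row_sum0 xE) //; lia.
Qed.

Lemma crsum_le1 i j : (i < m)%N -> (j < n)%N -> crsum x i j <= 1.
Proof.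
move=> im jn; rewrite -(sum_csum_row im).
by apply: ler_sum_nat_prefix => // k kn; apply: csum_ge0.
Qed.

Lemma csum_below_lam i j : (i < m)%N -> (j < n)%N -> (j < lam i)%N -> csum x i j = 0.
Proof.
move=> im jn jl; rewrite /csum big_seq big1 // => k; rewrite mem_index_iota => /andP[_ ki].
apply: (below_lam0 xE) => //; first lia.
by rewrite (leq_trans jl) // partition_nonincr.
Qed.

Lemma csum_beyond_nu i j : (i < m)%N -> (j < n)%N -> (nu i < j)%N -> csum x i j = 0.
Proof.
move=> im jn jl; have := col_sum0 xE (j := j) (leq_ltn_trans (leq0n _) jl) jn.
rewrite (big_cat_nat _ (n := i.+1)) //= -/(csum x i j) [X in _ + X]big_seq big1 ?addr0 // => k.
rewrite mem_index_iota => /andP[ik km]; apply: (beyond_nu0 xE) => //; first lia.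
by rewrite (leq_ltn_trans _ jl) // partition_nonincr //; lia.
Qed.

Definition greedy_mu i :=
  if (i < m)%N then find (fun j => 0 < csum x i j) (iota 0 n) else 0%N.

Lemma greedy_mu_spec i : (i < m)%N -> [/\ (greedy_mu i < n)%N,
  0 < csum x i (greedy_mu i) & forall j, (j < greedy_mu i)%N -> csum x i j = 0].
Proof.
move=> im; rewrite /greedy_mu im.
have csum0_of_not_gt0 j : (j < n)%N -> ~~ (0 < csum x i j) -> csum x i j = 0.
  by move=> jn; rewrite lt0r csum_ge0 // andbT negbK => /eqP.
have has_pos : has (fun j => 0 < csum x i j) (iota 0 n).
  apply: contraT => /hasPn no_pos; have := sum_csum_row im.
  rewrite big_seq big1 => [/eqP|j]; first by rewrite eq_sym oner_eq0.
  rewrite mem_index_iota => /andP[_ jn]; apply: (csum0_of_not_gt0 _ jn (no_pos _ _)).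
  by rewrite mem_iota add0n jn.
have gn : (find (fun j => (0 < csum x i j)%R) (iota 0 n) < n)%N.
  by rewrite -[X in (_ < X)%N](size_iota 0) -has_find.
split=> //; first by have := nth_find 0%N has_pos; rewrite nth_iota.
move=> j jg; apply: csum0_of_not_gt0; first exact: ltn_trans gn.
by have := before_find 0%N jg; rewrite nth_iota // => [->|]; last exact: ltn_trans gn.
Qed.

Lemma greedy_mu_out i : (m <= i)%N -> greedy_mu i = 0%N.
Proof. by rewrite /greedy_mu ltnNge => ->. Qed.

Lemma crsum_lt_greedy i j : (i < m)%N -> (j < greedy_mu i)%N -> crsum x i j = 0.
Proof.
move=> im jg; have [_ _ before] := greedy_mu_spec im.
rewrite /crsum /rsum big_seq big1 // => k; rewrite mem_index_iota => /andP[_ kj].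
by apply: before; lia.
Qed.

Lemma csum_le_crsum_greedy i j : (i < m)%N -> (j < n)%N -> (greedy_mu i <= j)%N ->
  csum x i (greedy_mu i) <= crsum x i j.
Proof.
move=> im jn gj; apply: (ler_sum_nat_term (f := csum x i)) => // k kj.
by apply: csum_ge0; lia.
Qed.

(* Otherwise row [i.+1] of [x] would have a negative partial sum at column [greedy_mu i]. *)
Lemma greedy_mu_nonincr i : (greedy_mu i.+1 <= greedy_mu i)%N.
Proof.
case: (ltnP i.+1 m) => im; last by rewrite greedy_mu_out.
rewrite leqNgt; apply/negP => gi; have im' := ltnW im.
have [gn c_gt0 _] := greedy_mu_spec im'.
have /andP[+ _] := rsum_in01 xP im gn.
rewrite rsum_crsumS crsum_lt_greedy // sub0r oppr_ge0 => D_le0.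
have := csum_le_crsum_greedy im' gn (leqnn _).
by rewrite leNgt (le_lt_trans D_le0 c_gt0).
Qed.

Lemma greedy_mu_admissible : admissible greedy_mu.
Proof.
split.
- by split; [exact: greedy_mu_nonincr | exists m => i; apply: greedy_mu_out].
- move=> i; case: (ltnP i m) => im; last by rewrite lam_rect.1 //; lia.
  rewrite leqNgt; apply/negP => gl; have [gn c_gt0 _] := greedy_mu_spec im.
  by rewrite csum_below_lam ?ltxx in c_gt0.
- move=> i; case: (ltnP i m) => im; last by rewrite greedy_mu_out.
  rewrite leqNgt; apply/negP => ng; have [gn c_gt0 _] := greedy_mu_spec im.
  by rewrite csum_beyond_nu ?ltxx in c_gt0.
Qed.

Lemma box_eq_mmu_greedy : (forall i, (i < m)%N -> 1 <= csum x i (greedy_mu i)) ->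
  box_eq x (mmu greedy_mu).
Proof.
have [mu_part _ _] := greedy_mu_admissible.
move=> c_ge1; apply: box_eq_of_csum => i j im jn; rewrite csum_mmu //.
have [gn _ _] := greedy_mu_spec im.
have c1 : csum x i (greedy_mu i) = 1 by apply/le_anti; rewrite csum_le1 ?c_ge1.
have [->|ne] := eqVneq j (greedy_mu i); first by rewrite c1.
have := ler_sum_nat_pair (fun k kn => csum_ge0 im kn) jn gn ne.
rewrite sum_csum_row // c1 /= mulr0n => C_le1.
by apply/le_anti; rewrite csum_ge0 // andbT; lra.
Qed.

Section Peel.
Variable t : R.
Hypotheses (t_lt1 : t < 1) (t_le : forall i, (i < m)%N -> t <= csum x i (greedy_mu i)).

Definition peel i j := (1 - t)^-1 * (x i j - t * mmu greedy_mu i j).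

Let mu_part : is_partition greedy_mu.
Proof. by case: greedy_mu_admissible. Qed.

Lemma csum_peel_bound i j : (i < m)%N -> (j < n)%N ->
  0 <= csum x i j - t * (j == greedy_mu i)%:R <= 1 - t.
Proof.
move=> im jn; have [gn _ _] := greedy_mu_spec im; have tc := t_le im.
have C0 := csum_ge0 im jn; have C1 := csum_le1 im jn.
have [e|ne] := eqVneq j (greedy_mu i).
  by rewrite mulr1; rewrite e in C0 C1 *; apply/andP; split; lra.
have := ler_sum_nat_pair (fun k kn => csum_ge0 im kn) jn gn ne.
by rewrite sum_csum_row // mulr0 subr0 => Cc; apply/andP; split; lra.
Qed.

Lemma crsum_peel_bound i j : (i < m)%N -> (j < n)%N ->
  0 <= crsum x i j - t * (greedy_mu i <= j)%N%:R <= 1 - t.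
Proof.
move=> im jn; have tc := t_le im; have D1 := crsum_le1 im jn.
case: (leqP (greedy_mu i) j) => gj; last first.
  by rewrite crsum_lt_greedy // mulr0 subr0 lexx subr_ge0 ltW.
by have := csum_le_crsum_greedy im jn gj; rewrite mulr1 => Dc; apply/andP; split; lra.
Qed.

(* The indicators differ only for [greedy_mu i.+1 <= j < greedy_mu i], where
   [crsum x i j = 0] and [crsum x i.+1 j >= t]. *)
Lemma crsum_peel_mono i j : (i.+1 < m)%N -> (j < n)%N ->
  crsum x i j - t * (greedy_mu i <= j)%N%:R <=
  crsum x i.+1 j - t * (greedy_mu i.+1 <= j)%N%:R.
Proof.
move=> im jn; have /andP[+ _] := rsum_in01 xP im jn; rewrite rsum_crsumS subr_ge0 => DD.
case: (leqP (greedy_mu i) j) => aj.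
  by rewrite (leq_trans (greedy_mu_nonincr i) aj) lerD2r.
case: (leqP (greedy_mu i.+1) j) => bj; last by rewrite !mulr0 !subr0.
have := csum_le_crsum_greedy im jn bj; have := t_le im.
by rewrite (crsum_lt_greedy (ltnW im) aj) mulr0 mulr1 subr0; lra.
Qed.

Lemma pasm_cond_peel : pasm_cond peel.
Proof.
have s_gt0 : 0 < (1 - t)^-1 by rewrite invr_gt0 subr_gt0.
have scale01 a : 0 <= a <= 1 - t -> 0 <= (1 - t)^-1 * a <= 1.
  case/andP=> a0 a1; apply/andP; split; first by rewrite mulr_ge0 // ltW.
  by rewrite ler_pdivrMl ?mulr1 // subr_gt0.
split.
- by move=> i j im jn; rewrite csum_affine csum_mmu // scale01 ?csum_peel_bound.
- apply: rsum_in01_of_crsum => i j im jn; rewrite !crsum_affine !crsum_mmu //.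
    by rewrite scale01 ?crsum_peel_bound.
  by rewrite ler_wpM2l ?crsum_peel_mono // ltW.
apply: pasm_eqs_affine (pasm_eqsP xP) (pasm_eqsP (pasm_cond_mmu _)).
  by rewrite mulVf // subr_eq0 gt_eqF.
exact: greedy_mu_admissible.
Qed.

Lemma csupport_peel i0 : (i0 < m)%N -> csum x i0 (greedy_mu i0) = t ->
  csupport peel \proper csupport x.
Proof.
move=> i0m c_t; apply/properP; split.
  apply/subsetP => -[i j]; rewrite !inE /=; apply: contraNN => /eqP C0.
  have [_ c_gt0 _] := greedy_mu_spec (ltn_ord i).
  have ne : (j : nat) != greedy_mu i by apply: contraTneq c_gt0 => <-; rewrite C0 ltxx.
  by rewrite csum_affine csum_mmu // C0 (negbTE ne) mulr0 subrr mulr0.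
have [gn c_gt0 _] := greedy_mu_spec i0m.
exists (Ordinal i0m, Ordinal gn); rewrite !inE /=; first by rewrite gt_eqF.
by rewrite csum_affine csum_mmu // c_t eqxx mulr1 subrr mulr0 eqxx.
Qed.

End Peel.

End Greedy.

Lemma pasm_cond_decomp X : pasm_cond (mxentry X) ->
  let M := Mmu R m n (greedy_mu (mxentry X)) in
  X = M \/ exists t Y, [/\ 0 <= t <= 1, pasm_cond (mxentry Y),
    csupport (mxentry Y) \proper csupport (mxentry X) & X = t *: M + (1 - t) *: Y].
Proof.
move=> xP M; set x := mxentry X; set mu := greedy_mu x.
have [i0 _ i0_min] := arg_minP (fun i : 'I_m => csum x i (mu i)) (isT : predT (Ordinal m_gt0)).
set t := csum x i0 (mu i0) in i0_min.
have t_le i : (i < m)%N -> t <= csum x i (mu i) by move=> im; apply: (i0_min (Ordinal im)).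
have [_ t_gt0 _] := greedy_mu_spec xP (ltn_ord i0).
have [t_ge1|t_lt1] := lerP 1 t.
  left; apply/matrixP => i j; rewrite -mxentryE -[M i j]mxentryE mxentry_Mmu //.
  by apply: box_eq_mmu_greedy => // k km; apply: le_trans t_ge1 (t_le k km).
right; exists t, ((1 - t)^-1 *: (X - t *: M)).
have Y_peel : box_eq (peel x t) (mxentry ((1 - t)^-1 *: (X - t *: M))).
  by move=> i j im jn; rewrite mxentry_affine mxentry_Mmu.
split.
- by rewrite !ltW.
- exact: pasm_cond_box_eq Y_peel (pasm_cond_peel xP t_lt1 t_le).
- by rewrite -(csupport_box_eq Y_peel) (csupport_peel xP (ltn_ord i0) erefl).
- have t_neq1 : 1 - t != 0 by rewrite subr_eq0 gt_eqF.
  by rewrite scalerA mulfV // scale1r subrKC.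
Qed.

Lemma PASM_of_pasm_cond X : pasm_cond (mxentry X) -> PASM lam nu X.
Proof.
have [N] := ubnP #|csupport (mxentry X)|; elim: N X => // N IH X XN xP.
have [mu_part lam_mu mu_nu] := greedy_mu_admissible xP.
case: (pasm_cond_decomp xP) => [->|[t [Y [t01 yP Y_lt ->]]]].
  by apply: conv_hull_mem; exists (greedy_mu (mxentry X)).
apply: conv_hull_mix => //; first by exists (greedy_mu (mxentry X)).
by apply: IH yP; apply: leq_trans (proper_card Y_lt) _; rewrite -ltnS.
Qed.

End PASMDescription.

Theorem theorem1 (R : realType) (m n : nat) (lam nu : nat -> nat) :
  (0 < m)%N -> (0 < n)%N ->
  is_partition lam -> is_partition nu ->
  part_sub lam nu ->
  in_rect n.-1 m.-1 lam -> in_rect n.-1 m.-1 nu ->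
  forall X : 'M[R]_(m, n), PASM lam nu X <-> PASM_ineq lam nu X.
Proof.
move=> m_gt0 n_gt0 lam_part nu_part _ lam_rect nu_rect X.
rewrite (PASM_ineqE lam nu m_gt0 n_gt0); split.
  exact: pasm_cond_of_PASM.
exact: PASM_of_pasm_cond.
Qed.
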